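(* Fix $\gamma \in (\tfrac{2}{3},2)$ and let $x \in B_1^+(\mathrm{VI}_0) \setminus S_1^+(\mathrm{VI}_0)$. Then the solution through $x$ satisfies $$\lim_{\tau \to -\infty} \big(N_-^2 - N_+^2\big)(\tau) = 0.$$ In particular, $\alpha(x) \subset B(\mathrm{I}) \cup B_2^+(\mathrm{II}) \cup B_3^-(\mathrm{II})$.
   Context: Set $q^* := \tfrac{3\gamma-2}{2} \in (0,2)$. On $\mathbb{R}^5$ with coordinates $(\Sigma_+,\Sigma_-,N_+,N_-,\Omega)$ consider the system (with $' = d/d\tau$) $\Sigma_+' = -(2-q)\Sigma_+ - 2N_-^2$, $\Sigma_-' = -(2-q)\Sigma_- - 2\sqrt{3}N_+N_-$, $N_+' = (q+2\Sigma_+)N_+ + 2\sqrt{3}\Sigma_- N_-$, $N_-' = (q+2\Sigma_+)N_- + 2\sqrt{3}\Sigma_- N_+$, $\Omega' = 2(q-q^* )\Omega$, where $q := 2(\Sigma_+^2+\Sigma_-^2) + q^*\Omega$. The phase space $B_1^+(\mathrm{VI}_0)$ is the set of points satisfying $\Omega + \Sigma_+^2 + \Sigma_-^2 + N_-^2 = 1$, $\Omega \ge 0$ and $N_- > |N_+|$; it is invariant, solutions exist for all $\tau$, and $\varphi^\tau(x)$ denotes the flow; $(N_\pm)(\tau)$ means $N_\pm(\varphi^\tau(x))$. The $\alpha$-limit set $\alpha(x)$ is the set of all limits of $\varphi^{\tau_k}(x)$ with $\tau_k \to -\infty$. $S_1^+(\mathrm{VI}_0) := B_1^+(\mathrm{VI}_0)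 \cap \{\Sigma_- = 0, N_+ = 0\}$. Writing $\overline{B_1^+(\mathrm{VI}_0)}$ for the closure in $\mathbb{R}^5$: $B(\mathrm{I}) := \overline{B_1^+(\mathrm{VI}_0)} \cap \{N_+ = N_- = 0\}$, $B_2^+(\mathrm{II}) := \overline{B_1^+(\mathrm{VI}_0)} \cap \{N_- = N_+ \neq 0\}$, $B_3^-(\mathrm{II}) := \overline{B_1^+(\mathrm{VI}_0)} \cap \{N_- = -N_+ \neq 0\}$. *)

From HB Require Import structures.
From mathcomp Require Import all_boot all_order all_algebra.
From mathcomp Require Import all_classical all_reals all_analysis.
Unset Printing Implicit Defensive.
Import Order.TTheory GRing.Theory Num.Theory.
Import numFieldNormedType.Exports.
Local Open Scope classical_set_scope.
Local Open Scope ring_scope.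

(* Points of R^5 with coordinates (Sigma_+, Sigma_-, N_+, N_-, Omega),
   encoded as nested pairs ((((Sp, Sm), Np), Nm), Om) with the product topology. *)
Definition pt5 (R : realType) := (R * R * R * R * R)%type.

Definition SpOf {R : realType} (p : pt5 R) : R := p.1.1.1.1.
Definition SmOf {R : realType} (p : pt5 R) : R := p.1.1.1.2.
Definition NpOf {R : realType} (p : pt5 R) : R := p.1.1.2.
Definition NmOf {R : realType} (p : pt5 R) : R := p.1.2.
Definition OmOf {R : realType} (p : pt5 R) : R := p.2.

Definition qstar {R : realType} (gamma : R) : R := (3 * gamma - 2) / 2.

Definition qfun {R : realType} (gamma Sp Sm Om : R) : R :=
  2 * (Sp ^+ 2 + Sm ^+ 2) + qstar gamma * Om.

Definition B1plus (R : realType) : set (pt5 R) :=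
  [set p | OmOf p + SpOf p ^+ 2 + SmOf p ^+ 2 + NmOf p ^+ 2 = 1
           /\ 0 <= OmOf p /\ `|NpOf p| < NmOf p].

Definition S1plus (R : realType) : set (pt5 R) :=
  B1plus R `&` [set p | SmOf p = 0 /\ NpOf p = 0].

Definition BI (R : realType) : set (pt5 R) :=
  closure (B1plus R) `&` [set p | NpOf p = 0 /\ NmOf p = 0].
Definition B2plusII (R : realType) : set (pt5 R) :=
  closure (B1plus R) `&` [set p | NmOf p = NpOf p /\ NpOf p != 0].
Definition B3minusII (R : realType) : set (pt5 R) :=
  closure (B1plus R) `&` [set p | NmOf p = - NpOf p /\ NpOf p != 0].

Definition is_solution {R : realType} (gamma : R) (X : R -> pt5 R) : Prop :=
  forall t : R,
    let Sp := SpOf (X t) in let Sm := SmOf (X t) in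
    let Np := NpOf (X t) in let Nm := NmOf (X t) in
    let Om := OmOf (X t) in let q := qfun gamma Sp Sm Om in
    [/\ is_derive t 1 (fun s => SpOf (X s)) (- (2 - q) * Sp - 2 * Nm ^+ 2),
        is_derive t 1 (fun s => SmOf (X s))
                      (- (2 - q) * Sm - 2 * Num.sqrt 3 * Np * Nm),
        is_derive t 1 (fun s => NpOf (X s))
                      ((q + 2 * Sp) * Np + 2 * Num.sqrt 3 * Sm * Nm),
        is_derive t 1 (fun s => NmOf (X s))
                      ((q + 2 * Sp) * Nm + 2 * Num.sqrt 3 * Sm * Np) &
        is_derive t 1 (fun s => OmOf (X s)) (2 * (q - qstar gamma) * Om)].

Definition alpha_limit {R : realType} (X : R -> pt5 R) : set (pt5 R) :=
  [set p | exists tk : nat -> R, tk @ \oo --> -oo /\ (X \o tk) @ \oo --> p].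

From HB Require Import structures.
From mathcomp Require Import all_boot all_order all_algebra.
From mathcomp Require Import all_classical all_reals all_analysis.
From mathcomp Require Import ring lra.
Import Order.TTheory GRing.Theory Num.Theory.
Import numFieldNormedType.Exports.
Local Open Scope classical_set_scope.
Local Open Scope ring_scope.

(** Δ = N_-² − N_+² obeys Δ' = 2(q + 2Σ_+)Δ, and N_- ± N_+ satisfy linear
    equations f' = c f as well, so their signs, hence Δ > 0, are preserved
    (as are the constraint and Ω ≥ 0). The function
    V = (Σ_-² + N_+² + N_- Σ_- N_+ / 16) / Δ satisfies V' ≤ −ΔV/16: without
    the cross term one gets exactly V' = −4(1 + Σ_+)Σ_-²/Δ, and the cross term
    supplies the missing decay in N_+. Off S_1^+(VI_0) we have V(0) > 0, while
    ΔV ≤ 2 and Δ' ≤ 8. So whenever Δ(τ) ≥ ε with τ ≤ 0, V gains a fixed amount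
    on [τ − ε/16, τ]; since V ≤ 2/ε at such times, Δ ≥ ε cannot recur
    arbitrarily far in the past, i.e. Δ → 0 as τ → −∞. Every α-limit point
    therefore lies in the closure of B_1^+(VI_0) and has N_-² = N_+². *)

Section RealCalculus.
Context {R : realType}.
Implicit Types (f c df : R -> R) (a b k x K : R).

Lemma is_derive_sqr {f a x} : is_derive x 1 f a ->
  is_derive x 1 (fun y => f y ^+ 2) (2 * f x * a).
Proof.
move=> fa; have := is_deriveM fa fa.
by rewrite -[f * f]/(fun y => f y ^+ 2) => /is_derive_eq; apply; rewrite /GRing.scale /=; ring.
Qed.

Lemma is_derive_expRM k x : is_derive x 1 (fun y => expR (k * y)) (expR (k * x) * k).
Proof.
have lin : is_derive x 1 (fun y : R => k * y) k.
  apply: is_derive_eq (is_deriveZ k (is_derive_id x 1)) _.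
  by rewrite /GRing.scale /= mulr1.
exact: (is_derive1_comp (is_derive_expR (k * x)) lin).
Qed.

Lemma continuous_of_is_derive {f df} : (forall x, is_derive x 1 f (df x)) -> continuous f.
Proof.
move=> fdf x; apply/differentiable_continuous; rewrite -derivable1_diffP.
by case: (fdf x).
Qed.

Lemma MVT_le {f df a b} K : a <= b -> (forall x, is_derive x 1 f (df x)) ->
  (forall x, a <= x <= b -> df x <= K) -> f b - f a <= K * (b - a).
Proof.
move=> ab fdf dfK.
have [x xab ->] := MVT_segment ab (fun x _ => fdf x)
  (continuous_subspaceT (continuous_of_is_derive fdf)).
move: xab; rewrite in_itv /= => /dfK dfxK.
by rewrite ler_wpM2r ?subr_ge0.
Qed.

Lemma MVT_ge {f df a b} K : a <= b -> (forall x, is_derive x 1 f (df x)) ->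
  (forall x, a <= x <= b -> K <= df x) -> K * (b - a) <= f b - f a.
Proof.
move=> ab fdf dfK.
have [x xab ->] := MVT_segment ab (fun x _ => fdf x)
  (continuous_subspaceT (continuous_of_is_derive fdf)).
move: xab; rewrite in_itv /= => /dfK dfxK.
by rewrite ler_wpM2r ?subr_ge0.
Qed.

Lemma continuous_bounded_segment {c a b} : continuous c -> a <= b ->
  exists K, forall x, a <= x <= b -> `|c x| <= K.
Proof.
move=> c_cont ab.
have normc_cont : {within `[a, b], continuous (fun x => `|c x|)}.
  by apply: continuous_subspaceT => x; apply: continuous_comp (c_cont x) _; exact: norm_continuous.
have [m _ maxm] := EVT_max ab normc_cont.
by exists `|c m| => x xab; apply: maxm; rewrite in_itv.
Qed.

End RealCalculus.

Section LinearODE.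
Context {R : realType} {f c : R -> R}.
Implicit Types (k s t y : R).
Hypothesis c_cont : continuous c.
Hypothesis f_derive : forall t, is_derive t 1 f (c t * f t).

Let weighted_sqr_derive k t :
  is_derive t 1 (fun y => f y ^+ 2 * expR (k * y)) (f t ^+ 2 * expR (k * t) * (2 * c t + k)).
Proof.
have := is_deriveM (is_derive_sqr (f_derive t)) (is_derive_expRM k t).
by move=> /is_derive_eq; apply; rewrite /GRing.scale /=; ring.
Qed.

Let weighted_sqr_le0 y k : f y ^+ 2 * expR k <= 0 -> f y = 0.
Proof.
rewrite pmulr_lle0 ?expR_gt0 // => fy2_le0.
by apply/eqP; rewrite -sqrf_eq0 eq_le fy2_le0 sqr_ge0.
Qed.

(* If |c| <= K between t0 and t, then y |-> f y ^ 2 * e^(-2Ky) is nonincreasing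
   and y |-> f y ^ 2 * e^(2Ky) nondecreasing there. *)
Lemma linear_ode_eq0 (t0 t : R) : f t0 = 0 -> f t = 0.
Proof.
move=> ft0; have [t0t|tt0] := leP t0 t.
- have [K cK] := continuous_bounded_segment c_cont t0t.
  have := MVT_le 0 t0t (weighted_sqr_derive (- (2 * K))).
  rewrite ft0 expr0n !mul0r subr0 => /(_ _)/weighted_sqr_le0; apply => x /cK cxK.
  apply: mulr_ge0_le0; first by rewrite mulr_ge0 ?expR_ge0 ?sqr_ge0.
  suff : c x <= K by lra.
  exact: le_trans (ler_norm _) cxK.
- have [K cK] := continuous_bounded_segment c_cont (ltW tt0).
  have := MVT_ge 0 (ltW tt0) (weighted_sqr_derive (2 * K)).
  rewrite ft0 expr0n !mul0r sub0r oppr_ge0 => /(_ _)/weighted_sqr_le0; apply => x /cK cxK.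
  apply: mulr_ge0; first by rewrite mulr_ge0 ?expR_ge0 ?sqr_ge0.
  suff : - c x <= K by lra.
  by rewrite -normrN in cxK; exact: le_trans (ler_norm _) cxK.
Qed.

Lemma linear_ode_gt0 (t0 t : R) : 0 < f t0 -> 0 < f t.
Proof.
move=> ft0_gt0; rewrite ltNge; apply/negP => ft_le0.
have f_cont := continuous_of_is_derive f_derive.
suff [s fs0] : exists s, f s = 0.
  by move: ft0_gt0; rewrite (linear_ode_eq0 s t0 fs0) ltxx.
have [t0t|tt0] := leP t0 t.
- have f0_between : Num.min (f t0) (f t) <= 0 <= Num.max (f t0) (f t).
    by rewrite ge_min le_max ft_le0 (ltW ft0_gt0) orbT.
  by have [s _ fs0] := IVT t0t (continuous_subspaceT f_cont) f0_between; exists s.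
- have f0_between : Num.min (f t) (f t0) <= 0 <= Num.max (f t) (f t0).
    by rewrite ge_min le_max ft_le0 (ltW ft0_gt0) orbT.
  by have [s _ fs0] := IVT (ltW tt0) (continuous_subspaceT f_cont) f0_between; exists s.
Qed.

Lemma linear_ode_ge0 (t0 t : R) : 0 <= f t0 -> 0 <= f t.
Proof.
rewrite le_eqVlt => /predU1P[ft0|ft0_gt0]; last exact/ltW/(linear_ode_gt0 t0).
by rewrite (linear_ode_eq0 t0 t (esym ft0)).
Qed.

End LinearODE.

Section BackwardDecay.
Context {R : realType} {D V dD dV : R -> R} {c L M : R}.
Implicit Types (e s t : R).
Hypotheses (c_gt0 : 0 < c) (L_gt0 : 0 < L).
Hypothesis D_derive : forall t, is_derive t 1 D (dD t).
Hypothesis V_derive : forall t, is_derive t 1 V (dV t).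
Hypothesis dD_le : forall t, dD t <= L.
Hypothesis dV_le : forall t, dV t <= - c * (D t * V t).
Hypothesis D_ge0 : forall t, 0 <= D t.
Hypothesis V_ge0 : forall t, 0 <= V t.
Hypothesis V0_gt0 : 0 < V 0.
Hypothesis DV_le : forall t, D t * V t <= M.

Lemma lyapunov_nonincreasing {s t} : s <= t -> V t <= V s.
Proof.
move=> st; have := MVT_le 0 st V_derive; rewrite mul0r subr_le0; apply => x _.
apply: le_trans (dV_le x) _.
by rewrite mulNr oppr_le0; apply: mulr_ge0 (ltW c_gt0) (mulr_ge0 _ _).
Qed.

Lemma lyapunov_backward_gain {e t} : 0 < e -> t <= 0 -> e <= D t ->
  V t + c * e ^+ 2 / (4 * L) * V 0 <= V (t - e / (2 * L)).
Proof.
move=> e_gt0 t_le0 eDt; set d := e / (2 * L).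
have d_gt0 : 0 < d by rewrite divr_gt0 ?mulr_gt0.
have D_ge_half s : t - d <= s <= t -> e / 2 <= D s.
  move=> /andP[ds st].
  have := MVT_le L st D_derive (fun x _ => dD_le x).
  have : L * (t - s) <= L * d by rewrite ler_pM2l //; lra.
  have Ld : L * d = e / 2 by rewrite /d; field; exact: lt0r_neq0.
  lra.
have td_le_t : t - d <= t by lra.
have := MVT_le (- c * (e / 2 * V 0)) td_le_t V_derive.
have -> : c * e ^+ 2 / (4 * L) * V 0 = c * (e / 2 * V 0) * d.
  by rewrite /d; field; exact: lt0r_neq0.
suff dV_bound x : t - d <= x <= t -> dV x <= - c * (e / 2 * V 0).
  by move=> /(_ dV_bound); rewrite opprB mulNr; lra.
move=> xdt; apply: le_trans (dV_le x) _; rewrite !mulNr lerN2 ler_pM2l //.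
apply: ler_pM; rewrite ?(ltW e_gt0) ?(ltW V0_gt0) ?D_ge_half //; first lra.
apply: lyapunov_nonincreasing; case/andP: xdt => _ xt; exact: le_trans xt t_le0.
Qed.

Lemma lyapunov_unbounded_of_recurrent {e} : 0 < e ->
  (forall T, exists2 t, t <= T & e <= D t) ->
  forall k : nat, exists t,
    [/\ t <= 0, e <= D t & V 0 + k%:R * (c * e ^+ 2 / (4 * L) * V 0) <= V t].
Proof.
move=> e_gt0 recurrent; elim=> [|k [t [t_le0 eDt Vt]]].
  have [t t_le0 eDt] := recurrent 0.
  by exists t; rewrite mul0r addr0 lyapunov_nonincreasing.
have [t' t't eDt'] := recurrent (t - e / (2 * L)).
exists t'; split => //.
  have : 0 < e / (2 * L) by rewrite divr_gt0 ?mulr_gt0.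
  lra.
have := lyapunov_backward_gain e_gt0 t_le0 eDt.
have := lyapunov_nonincreasing t't.
rewrite -natr1 mulrDl mul1r; lra.
Qed.

Lemma rate_eventually_lt {e} : 0 < e -> exists T, forall t, t <= T -> D t < e.
Proof.
move=> e_gt0; apply: contrapT => not_eventually.
have recurrent T : exists2 t, t <= T & e <= D t.
  apply: contrapT => no_t; apply: not_eventually; exists T => t tT.
  by rewrite ltNge; apply/negP => eDt; apply: no_t; exists t.
set kappa := c * e ^+ 2 / (4 * L) * V 0.
have kappa_gt0 : 0 < kappa by rewrite mulr_gt0 // divr_gt0 ?mulr_gt0 // exprn_gt0.
have [t [_ eDt Vt]] :=
  lyapunov_unbounded_of_recurrent e_gt0 recurrent (Num.truncn (M / e / kappa)).+1.
have Vt_le : V t <= M / e.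
  rewrite ler_pdivlMr // mulrC; apply: le_trans (DV_le t).
  by rewrite ler_wpM2r.
have k_kappa_gt : M / e < (Num.truncn (M / e / kappa)).+1%:R * kappa.
  by rewrite -ltr_pdivrMr //; exact: truncnS_gt.
move: Vt; rewrite -/kappa => /le_trans/(_ Vt_le)/le_lt_trans/(_ k_kappa_gt).
by rewrite gtrDr ltNge (ltW V0_gt0).
Qed.

Lemma rate_cvgNy0 : D @ -oo --> 0.
Proof.
apply/cvgrPdist_lt => e e_gt0.
have [T DT] := rate_eventually_lt e_gt0.
exists T; split; first exact: num_real.
by move=> t tT; rewrite sub0r normrN ger0_norm ?D_ge0 ?DT ?ltW.
Qed.

End BackwardDecay.

Lemma cross_term_le {R : realFieldType} (n v m : R) : n ^+ 2 <= 1 ->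
  `|n * v * m| <= (v ^+ 2 + m ^+ 2) / 2.
Proof.
move=> n_le1; have : (n * v * m) ^+ 2 <= (v * m) ^+ 2.
  by rewrite !exprMn -mulrA; exact: ler_piMl (mulr_ge0 (sqr_ge0 v) (sqr_ge0 m)) n_le1.
have := sqr_ge0 (v - m); have := sqr_ge0 (v + m).
by move=> *; rewrite ler_norml; apply/andP; split; nra.
Qed.

Lemma sqrt3_bounds (R : rcfType) : 17 / 10 <= Num.sqrt (3 : R) <= 2.
Proof.
have s_sq : Num.sqrt (3 : R) ^+ 2 = 3 by rewrite sqr_sqrtr.
have := sqrtr_ge0 (3 : R); move=> s_ge0; apply/andP; split; nra.
Qed.

(* With a = 1 + Σ_+, D = 2 - q, s = √3 and (n, m, v) = (N_-, N_+, Σ_-), the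
   left side is 16 Δ V' (see [V_derive]) and the right side is −Δ (Δ V). *)
Lemma lyapunov_derivative_ineq (R : realFieldType) (a D s n m v : R) :
  0 <= D -> D <= 2 -> D <= 4 * a -> n ^+ 2 <= 2 * a -> m ^+ 2 <= n ^+ 2 -> n ^+ 2 <= 1 ->
  17 / 10 <= s -> s <= 2 ->
  16 * (-4 * a * v ^+ 2)
    + (- D * n * v * m + 2 * s * (v ^+ 2 * m ^+ 2 + v ^+ 2 * n ^+ 2 - m ^+ 2 * n ^+ 2))
  <= - ((n ^+ 2 - m ^+ 2) * (v ^+ 2 + m ^+ 2 + n * v * m / 16)).
Proof.
move=> D_ge0 D_le2 D_le4a n_le2a m_le_n n_le1 s_ge s_le.
have v2 := sqr_ge0 v; have m2 := sqr_ge0 m; have n2 := sqr_ge0 n.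
have a_ge0 : 0 <= a by lra.
have A_ge0 : 0 <= a * v ^+ 2 by rewrite mulr_ge0.
have B_ge0 : 0 <= n ^+ 2 * m ^+ 2 by rewrite mulr_ge0.
have D_term : - (D * n * v * m) <= a * v ^+ 2 + 2 * (n ^+ 2 * m ^+ 2).
  have amgm : - (n * v * m) <= v ^+ 2 / 4 + n ^+ 2 * m ^+ 2.
    have := sqr_ge0 (v / 2 + n * m); nra.
  have : D * (- (n * v * m)) <= D * (v ^+ 2 / 4 + n ^+ 2 * m ^+ 2) by apply: ler_wpM2l.
  nra.
have s_term : s * (v ^+ 2 * m ^+ 2 + v ^+ 2 * n ^+ 2) <= 8 * (a * v ^+ 2).
  have : v ^+ 2 * m ^+ 2 + v ^+ 2 * n ^+ 2 <= 4 * (a * v ^+ 2) by nra.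
  have : 0 <= v ^+ 2 * m ^+ 2 + v ^+ 2 * n ^+ 2 by nra.
  nra.
have s_B : 17 / 10 * (n ^+ 2 * m ^+ 2) <= s * (m ^+ 2 * n ^+ 2).
  by rewrite [m ^+ 2 * _]mulrC; nra.
have cross : n * v * m / 16 <= (v ^+ 2 + m ^+ 2) / 32.
  have := ler_norm (n * v * m); have := cross_term_le n v m n_le1; lra.
have Delta_term : (n ^+ 2 - m ^+ 2) * (v ^+ 2 + m ^+ 2 + n * v * m / 16)
    <= 33 / 32 * (2 * (a * v ^+ 2) + n ^+ 2 * m ^+ 2).
  have : (n ^+ 2 - m ^+ 2) * (v ^+ 2 + m ^+ 2 + n * v * m / 16)
      <= (n ^+ 2 - m ^+ 2) * (33 / 32 * (v ^+ 2 + m ^+ 2)).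
    by apply: ler_wpM2l; lra.
  nra.
have -> : 16 * (-4 * a * v ^+ 2)
    + (- D * n * v * m + 2 * s * (v ^+ 2 * m ^+ 2 + v ^+ 2 * n ^+ 2 - m ^+ 2 * n ^+ 2))
  = -64 * (a * v ^+ 2) - (D * n * v * m) + 2 * (s * (v ^+ 2 * m ^+ 2 + v ^+ 2 * n ^+ 2))
    - 2 * (s * (m ^+ 2 * n ^+ 2)) by ring.
lra.
Qed.

Section BianchiVI0Orbit.
Context {R : realType} {gamma : R} {X : R -> pt5 R}.
Implicit Types s t : R.
Hypotheses (gamma_gt : 2 / 3 < gamma) (gamma_lt : gamma < 2).
Hypothesis X_sol : is_solution gamma X.
Hypothesis X0 : X 0 \in B1plus R `\` S1plus R.

Local Notation Sp t := (SpOf (X t)).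
Local Notation Sm t := (SmOf (X t)).
Local Notation Np t := (NpOf (X t)).
Local Notation Nm t := (NmOf (X t)).
Local Notation Om t := (OmOf (X t)).
Local Notation q t := (qfun gamma (Sp t) (Sm t) (Om t)).
Local Notation s3 := (Num.sqrt (3 : R)).
Local Notation Delta t := (Nm t ^+ 2 - Np t ^+ 2).
Local Notation P t := (Sm t ^+ 2 + Np t ^+ 2 + Nm t * Sm t * Np t / 16).
Local Notation V t := (P t / Delta t).
Local Notation V_num t := (16 * (-4 * (1 + Sp t) * Sm t ^+ 2)
  + (- (2 - q t) * Nm t * Sm t * Np t
     + 2 * s3 * (Sm t ^+ 2 * Np t ^+ 2 + Sm t ^+ 2 * Nm t ^+ 2 - Np t ^+ 2 * Nm t ^+ 2))).

Let X0_B1plus : B1plus R (X 0).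
Proof. by move: X0; rewrite inE => -[]. Qed.

Let X0_notS1plus : ~ (Sm 0 = 0 /\ Np 0 = 0).
Proof. by move: X0; rewrite inE => -[_ notS1] ?; apply: notS1. Qed.

Lemma Sp_continuous : continuous (fun t => Sp t).
Proof. by apply: continuous_of_is_derive => t; case: (X_sol t). Qed.

Lemma Sm_continuous : continuous (fun t => Sm t).
Proof. by apply: continuous_of_is_derive => t; case: (X_sol t). Qed.

Lemma Om_continuous : continuous (fun t => Om t).
Proof. by apply: continuous_of_is_derive => t; case: (X_sol t). Qed.

Lemma q_continuous : continuous (fun t => q t).
Proof.
move=> t; apply: cvgD; last by apply: cvgMl_tmp; exact: Om_continuous.
by apply: cvgMl_tmp; apply: cvgD; apply: cvgM; apply: Sp_continuous || apply: Sm_continuous.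
Qed.

Lemma constraint_preserved t : Om t + Sp t ^+ 2 + Sm t ^+ 2 + Nm t ^+ 2 = 1.
Proof.
pose G t := Om t + Sp t ^+ 2 + Sm t ^+ 2 + Nm t ^+ 2 - 1.
have G_derive s : is_derive s 1 G (2 * q s * G s).
  have [dSp dSm _ dNm dOm] := X_sol s.
  have := is_deriveB (is_deriveD (is_deriveD (is_deriveD dOm (is_derive_sqr dSp))
    (is_derive_sqr dSm)) (is_derive_sqr dNm)) (is_derive_cst (1 : R) s 1).
  by move=> /is_derive_eq; apply; rewrite /G /qfun; ring.
have c_cont : continuous (fun t => 2 * q t) by move=> s; apply: cvgMl_tmp; exact: q_continuous.
apply/eqP; rewrite -subr_eq0; apply/eqP; apply: (linear_ode_eq0 c_cont G_derive 0).
by rewrite /G; case: X0_B1plus => -> _; rewrite subrr.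
Qed.

Lemma Om_ge0 t : 0 <= Om t.
Proof.
have c_cont : continuous (fun t => 2 * (q t - qstar gamma)).
  move=> s; apply: cvgMl_tmp; apply: cvgB; [exact: q_continuous | exact: cvg_cst].
have Om_derive s : is_derive s 1 (fun t => Om t) (2 * (q s - qstar gamma) * Om s).
  by case: (X_sol s).
by apply: (linear_ode_ge0 c_cont Om_derive 0); case: X0_B1plus => _ [].
Qed.

Lemma Nm_add_Np_gt0 t : 0 < Nm t + Np t.
Proof.
have c_cont : continuous (fun t => q t + 2 * Sp t + 2 * s3 * Sm t).
  move=> s; apply: cvgD; first apply: cvgD; first exact: q_continuous.
    by apply: cvgMl_tmp; exact: Sp_continuous.
  by apply: cvgMl_tmp; exact: Sm_continuous.
have f_derive s : is_derive s 1 (fun t => Nm t + Np t)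
    ((q s + 2 * Sp s + 2 * s3 * Sm s) * (Nm s + Np s)).
  have [_ _ dNp dNm _] := X_sol s.
  by have /is_derive_eq := is_deriveD dNm dNp; apply; ring.
apply: (linear_ode_gt0 c_cont f_derive 0).
by case: X0_B1plus => _ [_]; rewrite ltr_norml; lra.
Qed.

Lemma Nm_sub_Np_gt0 t : 0 < Nm t - Np t.
Proof.
have c_cont : continuous (fun t => q t + 2 * Sp t - 2 * s3 * Sm t).
  move=> s; apply: cvgB; first apply: cvgD; first exact: q_continuous.
    by apply: cvgMl_tmp; exact: Sp_continuous.
  by apply: cvgMl_tmp; exact: Sm_continuous.
have f_derive s : is_derive s 1 (fun t => Nm t - Np t)
    ((q s + 2 * Sp s - 2 * s3 * Sm s) * (Nm s - Np s)).
  have [_ _ dNp dNm _] := X_sol s.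
  by have /is_derive_eq := is_deriveB dNm dNp; apply; ring.
apply: (linear_ode_gt0 c_cont f_derive 0).
by case: X0_B1plus => _ [_]; rewrite ltr_norml; lra.
Qed.

Lemma X_in_B1plus t : B1plus R (X t).
Proof.
split; [exact: constraint_preserved | split; first exact: Om_ge0].
have := Nm_add_Np_gt0 t; have := Nm_sub_Np_gt0 t.
by rewrite ltr_norml; lra.
Qed.

Lemma Delta_gt0 t : 0 < Delta t.
Proof. by rewrite subr_sqr mulr_gt0 ?Nm_add_Np_gt0 ?Nm_sub_Np_gt0. Qed.

Lemma qstar_bounds : 0 < qstar gamma < 2.
Proof.
have := gamma_gt; have := gamma_lt.
by rewrite /qstar; move=> *; apply/andP; split; [apply: divr_gt0 | rewrite ltr_pdivrMr]; lra.
Qed.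

Lemma q_bounds t : 2 * Sp t ^+ 2 <= q t <= 2.
Proof.
have := constraint_preserved t; have := Om_ge0 t; have /andP[qs_gt0 qs_lt2] := qstar_bounds.
have := sqr_ge0 (Sp t); have := sqr_ge0 (Sm t); have := sqr_ge0 (Nm t).
by rewrite /qfun => *; apply/andP; split; nra.
Qed.

Lemma coordinate_bounds t : [/\ Sp t ^+ 2 + Nm t ^+ 2 <= 1, Sm t ^+ 2 + Nm t ^+ 2 <= 1
  & Np t ^+ 2 <= Nm t ^+ 2].
Proof.
have := constraint_preserved t; have := Om_ge0 t; have := Delta_gt0 t.
have := sqr_ge0 (Sp t); have := sqr_ge0 (Sm t).
by move=> *; split; lra.
Qed.

Lemma Delta_derive t : is_derive t 1 (fun t => Delta t) (2 * (q t + 2 * Sp t) * Delta t).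
Proof.
have [_ _ dNp dNm _] := X_sol t.
by have /is_derive_eq := is_deriveB (is_derive_sqr dNm) (is_derive_sqr dNp); apply; ring.
Qed.

Lemma Delta_derive_le t : 2 * (q t + 2 * Sp t) * Delta t <= 8.
Proof.
have /andP[q_ge q_le2] := q_bounds t; have := Delta_gt0 t.
have [SpNm _ NpNm] := coordinate_bounds t.
have := sqr_ge0 (Sp t); have := sqr_ge0 (Nm t); have := sqr_ge0 (Np t).
have := sqr_ge0 (Sp t - 1).
by move=> *; nra.
Qed.

Let DeltaV t : Delta t * V t = P t.
Proof. by rewrite mulrC divfK // gt_eqF ?Delta_gt0. Qed.

Lemma V_derive t : is_derive t 1 (fun t => V t) (V_num t / (16 * Delta t)).
Proof.
have [_ dSm dNp dNm _] := X_sol t.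
have dP := is_deriveD (is_deriveD (is_derive_sqr dSm) (is_derive_sqr dNp))
  (is_deriveM (is_deriveM (is_deriveM dNm dSm) dNp) (is_derive_cst (16^-1 : R) t 1)).
have Delta_neq0 : Delta t != 0 by rewrite gt_eqF ?Delta_gt0.
have dDelta_inv := is_deriveV (f := fun t => Delta t) Delta_neq0 (Delta_derive t).
have /is_derive_eq := is_deriveM dP dDelta_inv; apply.
rewrite /GRing.scale /= !fctE; move: Delta_neq0; set D := Delta t => Delta_neq0.
by field.
Qed.

Lemma V_derive_le t : V_num t / (16 * Delta t) <= - (1 / 16) * (Delta t * V t).
Proof.
have [SpNm _ NpNm] := coordinate_bounds t.
have /andP[q_ge q_le2] := q_bounds t.
have /andP[s3_ge s3_le] := sqrt3_bounds R.
have := sqr_ge0 (Sp t); have := sqr_ge0 (Sp t + 1); have := sqr_ge0 (Nm t).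
move=> *.
rewrite ler_pdivrMr ?mulr_gt0 ?Delta_gt0 //.
have -> : - (1 / 16) * (Delta t * V t) * (16 * Delta t) = - (Delta t * P t).
  by rewrite DeltaV; field.
by apply: (@lyapunov_derivative_ineq _ (1 + Sp t) (2 - q t)); nra.
Qed.

Lemma P_bounds t :
  31 / 32 * (Sm t ^+ 2 + Np t ^+ 2) <= P t <= 33 / 32 * (Sm t ^+ 2 + Np t ^+ 2).
Proof.
have [SpNm _ _] := coordinate_bounds t.
have Nm_le1 : Nm t ^+ 2 <= 1 by have := sqr_ge0 (Sp t); lra.
have := cross_term_le (Nm t) (Sm t) (Np t) Nm_le1.
by rewrite ler_norml => /andP[lo hi]; apply/andP; split; lra.
Qed.

Lemma V_ge0 t : 0 <= V t.
Proof.
have /andP[P_ge _] := P_bounds t; have := sqr_ge0 (Sm t); have := sqr_ge0 (Np t).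
by move=> *; apply: divr_ge0; [lra | exact/ltW/Delta_gt0].
Qed.

Lemma V0_gt0 : 0 < V 0.
Proof.
rewrite divr_gt0 ?Delta_gt0 //; have /andP[P_ge _] := P_bounds 0.
apply: lt_le_trans P_ge; rewrite pmulr_rgt0 // lt_def paddr_eq0 ?sqr_ge0 //.
rewrite addr_ge0 ?sqr_ge0 // andbT !sqrf_eq0; apply/negP => /andP[/eqP ? /eqP ?].
exact: X0_notS1plus.
Qed.

Lemma DeltaV_le2 t : Delta t * V t <= 2.
Proof.
have /andP[_ P_le] := P_bounds t; have [_ SmNm NpNm] := coordinate_bounds t.
have := sqr_ge0 (Sm t); have := sqr_ge0 (Np t).
by rewrite DeltaV => *; lra.
Qed.

Lemma Delta_cvgNy0 : (fun t => Delta t) @ -oo --> 0.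
Proof.
apply: (rate_cvgNy0 _ _ Delta_derive V_derive Delta_derive_le V_derive_le
  (fun t => ltW (Delta_gt0 t)) V_ge0 V0_gt0 DeltaV_le2); lra.
Qed.

End BianchiVI0Orbit.

Section AlphaLimit.
Context {R : realType}.

Lemma alpha_limit_sub_closure (X : R -> pt5 R) (A : set (pt5 R)) :
  (forall t, A (X t)) -> alpha_limit X `<=` closure A.
Proof.
move=> XA p [tk [_ Xtk_p]]; apply: closed_cvg Xtk_p; first exact: closed_closure.
by apply: nearW => k; apply: subset_closure; exact: XA.
Qed.

Lemma alpha_limit_sub_zeros (X : R -> pt5 R) (g : pt5 R -> R) :
  continuous g -> (g \o X) @ -oo --> 0 -> alpha_limit X `<=` [set p | g p = 0].
Proof.
move=> g_cont gX_0 p [tk [tk_Ny Xtk_p]].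
exact: cvg_unique (cvg_comp _ _ Xtk_p (g_cont p)) (cvg_comp _ _ tk_Ny gX_0).
Qed.

Lemma NmNp_sqr_continuous : continuous (fun p : pt5 R => NmOf p ^+ 2 - NpOf p ^+ 2).
Proof.
have Nm_cont p : (@NmOf R) @ p --> NmOf p.
  by apply: (@cvg_comp _ _ _ fst snd _ (nbhs p.1)); [exact: cvg_fst | exact: cvg_snd].
have Np_cont p : (@NpOf R) @ p --> NpOf p.
  apply: (@cvg_comp _ _ _ (fun x : pt5 R => x.1.1) snd _ (nbhs p.1.1)); last exact: cvg_snd.
  by apply: (@cvg_comp _ _ _ fst fst _ (nbhs p.1)); exact: cvg_fst.
by move=> p; apply: cvgB; apply: cvgM; apply: Nm_cont || apply: Np_cont.
Qed.

Lemma closure_B1plus_NmNp_sqr_eq (p : pt5 R) :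
  closure (B1plus R) p -> NmOf p ^+ 2 = NpOf p ^+ 2 ->
  (BI R `|` B2plusII R `|` B3minusII R) p.
Proof.
move=> p_cl /eqP; rewrite eqf_sqr => /orP[]/eqP Nm_eq;
  have [Np0|Np_neq0] := eqVneq (NpOf p) 0.
- by left; left; split => //; split; rewrite // Nm_eq Np0.
- by left; right.
- by left; left; split => //; split; rewrite // Nm_eq Np0 oppr0.
- by right.
Qed.

End AlphaLimit.

Theorem mainTheorem4 (R : realType) (gamma : R) (X : R -> pt5 R) :
  2 / 3 < gamma -> gamma < 2 ->
  is_solution gamma X ->
  X 0 \in B1plus R `\` S1plus R ->
  (fun t => NmOf (X t) ^+ 2 - NpOf (X t) ^+ 2) @ -oo --> (0 : R) /\
  alpha_limit X `<=` BI R `|` B2plusII R `|` B3minusII R.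
Proof.
move=> gamma_gt gamma_lt X_sol X0.
have Delta_lim := Delta_cvgNy0 gamma_gt gamma_lt X_sol X0.
split=> // p alpha_p; apply: closure_B1plus_NmNp_sqr_eq.
  exact: alpha_limit_sub_closure (X_in_B1plus X_sol X0) _ alpha_p.
apply/eqP; rewrite -subr_eq0; apply/eqP.
exact: alpha_limit_sub_zeros NmNp_sqr_continuous Delta_lim _ alpha_p.
Qed.
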